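(* Let $f\in\mathbb F_q[t;\theta]$ have degree $\ge1$. Then $f$ is irreducible in $\mathbb F_q[t;\theta]$ if and only if $f^{[]}(x)$ has no divisor $u(x)\in\mathbb F_q[x^{[]}]$ (divisibility in $\mathbb F_q[x]$) with $0<\deg u<\deg f^{[]}$.
   Context: $p$ is a prime, $q=p^n$, $\theta$ is the Frobenius map $g\mapsto g^p$ on $\mathbb F_q$ and on $\mathbb F_q[x]$. $\mathbb F_q[t;\theta]$ is the skew polynomial ring with $ta=\theta(a)t$; it is contained in $S=\mathbb F_q[x][t;\theta]$ (where $tg=g^pt$). For $u\in S$ and $h\in\mathbb F_q[x]$, $u(h)$ is the unique element of $\mathbb F_q[x]$ with $u-u(h)\in S(t-h)$. For $f\in\mathbb F_q[t;\theta]$, $f^{[]}(x):=f(x)\in\mathbb F_q[x]$; explicitly, if $f=\sum a_it^i$ then $f^{[]}(x)=\sum a_ix^{[i]}$ where $[i]=\frac{p^i-1}{p-1}$ for $i\ge1$, $[0]=0$. $\mathbb F_q[x^{[]}]=\{\sum\alpha_ix^{[i]}\mid\alpha_i\in\mathbb F_q\}$. Irreducible means: not a unit and not a product of two non-units. *)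

From HB Require Import structures.
From mathcomp Require Import all_boot all_order all_algebra all_field.
Set Implicit Arguments. Unset Strict Implicit. Unset Printing Implicit Defensive.
Import GRing.Theory.
Local Open Scope ring_scope.

(* Skew polynomials F[t; theta], theta = Frobenius a |-> a^p, are represented
   by their coefficient sequences, stored in {poly F}: f = \sum_i f`_i t^i.
   Multiplication: (a t^i)(b t^j) = a theta^i(b) t^(i+j), theta^i(b) = b^(p^i). *)
Definition skew_mul (F : fieldType) (p : nat) (f g : {poly F}) : {poly F} :=
  \sum_(i < size f) \sum_(j < size g)
     (f`_i * g`_j ^+ (p ^ i)%N) *: 'X^(i + j).

Definition skew_unit (F : fieldType) (p : nat) (f : {poly F}) : Prop :=
  exists g : {poly F}, skew_mul p f g = 1 /\ skew_mul p g f = 1.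

Definition skew_irreducible (F : fieldType) (p : nat) (f : {poly F}) : Prop :=
  ~ skew_unit p f /\
  forall g h : {poly F}, f = skew_mul p g h -> skew_unit p g \/ skew_unit p h.

Definition bracket (p i : nat) : nat := ((p ^ i - 1) %/ (p - 1))%N.

Definition linearized (F : fieldType) (p : nat) (f : {poly F}) : {poly F} :=
  \sum_(i < size f) f`_i *: 'X^(bracket p i).

Definition in_bracket_span (F : fieldType) (p : nat) (u : {poly F}) : Prop :=
  exists s : seq F, u = \sum_(i < size s) s`_i *: 'X^(bracket p i).

(* For f = \sum a_i t^i in F[t; theta] (theta the p-Frobenius), the
   linearization f^[](x) = \sum a_i x^[i], with [i] = 1 + p + ... + p^(i-1),
   turns skew products into substitutions:
     (g h)^[] = \sum_i g_i (h^[])^(p^i) x^[i],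
   so h^[] divides (g h)^[] in F[x].  Conversely, if h^[] divides f^[], then
   the right Euclidean division f = q h + r (deg r < deg h) in the skew ring
   makes r^[] a multiple of h^[] of smaller degree, so r = 0 and h is a right
   factor of f.  As deg (g h) = deg g + deg h, the units are the nonzero
   constants and deg f^[] = [deg f] with i |-> [i] strictly increasing, a
   factorisation f = g h into non-units is the same as a divisor h^[] of f^[]
   in F[x^[]] of degree strictly between 0 and deg f^[]. *)

From HB Require Import structures.
From mathcomp Require Import all_boot all_order all_algebra all_field.
From mathcomp Require Import zify.
Set Implicit Arguments. Unset Strict Implicit. Unset Printing Implicit Defensive.
Import GRing.Theory.
Local Open Scope ring_scope.

Section Bracket.

Variable p : nat.
Hypothesis p_gt1 : (1 < p)%N.

Lemma bracket_geom i : bracket p i = (\sum_(k < i) p ^ k)%N.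
Proof.
have geom : (p ^ i - 1 = (\sum_(k < i) p ^ k) * (p - 1))%N.
  elim: i => [|i IH]; first by rewrite big_ord0 expn0.
  rewrite big_ord_recr /= mulnDl -IH expnS.
  have : (0 < p ^ i)%N by rewrite expn_gt0 ltnW.
  move: (p ^ i)%N => x; nia.
by rewrite /bracket geom mulnK // subn_gt0.
Qed.

Lemma bracket0 : bracket p 0 = 0%N.
Proof. by rewrite /bracket expn0 subnn div0n. Qed.

Lemma bracketS i : bracket p i.+1 = (bracket p i + p ^ i)%N.
Proof. by rewrite !bracket_geom big_ord_recr. Qed.

(* [i + j] = [j] p^i + [i]: the exponent rule behind the product formula
   for linearizations. *)
Lemma bracketD i j : bracket p (i + j) = (bracket p j * p ^ i + bracket p i)%N.
Proof.
elim: j => [|j IH]; first by rewrite addn0 bracket0.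
by rewrite addnS !bracketS IH expnD; lia.
Qed.

Lemma ltn_bracket : {mono bracket p : i j / (i < j)%N}.
Proof.
apply: leqW_mono; apply: Order.NatMonotonyTheory.incnP => i.
suff : (bracket p i < bracket p i.+1)%N by [].
by rewrite bracketS -[X in (X < _)%N]addn0 ltn_add2l expn_gt0 ltnW.
Qed.

End Bracket.

Section SkewProduct.

Variables (F : fieldType) (p : nat).
Hypothesis p_gt0 : (0 < p)%N.

Local Notation "f ** g" := (skew_mul p f g) (at level 40, left associativity).

Lemma skew_mul_widen (f g : {poly F}) n m :
  (size f <= n)%N -> (size g <= m)%N ->
  f ** g = \sum_(i < n) \sum_(j < m) (f`_i * g`_j ^+ (p ^ i)) *: 'X^(i + j).
Proof.
move=> sfn sgm; rewrite /skew_mul.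
rewrite (big_ord_widen n (fun i => \sum_(j < size g)
  (f`_i * g`_j ^+ (p ^ i)) *: 'X^(i + j))) // big_mkcond.
apply: eq_bigr => i _; case: ifP => [_|/negbT]; last first.
  by rewrite -leqNgt => fi0; rewrite big1 // => j _; rewrite nth_default ?mul0r ?scale0r.
rewrite (big_ord_widen m (fun j => (f`_i * g`_j ^+ (p ^ i)) *: 'X^(i + j))) //.
rewrite big_mkcond; apply: eq_bigr => j _; case: ifP => // /negbT.
rewrite -leqNgt => gj0; rewrite (nth_default _ gj0) expr0n.
by rewrite (negbTE (_ : p ^ i != 0)%N) ?mulr0 ?scale0r // -lt0n expn_gt0 p_gt0.
Qed.

Lemma skew_mul0l (g : {poly F}) : 0 ** g = 0.
Proof. by rewrite /skew_mul size_poly0 big_ord0. Qed.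

Lemma skew_mul0r (g : {poly F}) : g ** 0 = 0.
Proof. by rewrite /skew_mul big1 // => i _; rewrite size_poly0 big_ord0. Qed.

Lemma skew_mulDl (f1 f2 g : {poly F}) : (f1 + f2) ** g = f1 ** g + f2 ** g.
Proof.
set n := maxn (size f1) (size f2).
have s1 : (size f1 <= n)%N by rewrite leq_maxl.
have s2 : (size f2 <= n)%N by rewrite leq_maxr.
have s12 : (size (f1 + f2)%R <= n)%N by rewrite (leq_trans (size_polyD _ _)).
rewrite !(@skew_mul_widen _ _ n (size g)) // -big_split; apply: eq_bigr => i _.
by rewrite -big_split; apply: eq_bigr => j _; rewrite coefD mulrDl scalerDl.
Qed.

Definition skew_row (f g : {poly F}) (i : nat) : {poly F} :=
  \poly_(j < size g) (f`_i * g`_j ^+ (p ^ i)).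

(* The product as a sum of shifted rows; the top row carries the
   leading coefficient of f ** g. *)
Lemma skew_mul_rows (f g : {poly F}) :
  f ** g = \sum_(i < size f) 'X^i * skew_row f g i.
Proof.
rewrite /skew_mul; apply: eq_bigr => i _; rewrite /skew_row poly_def mulr_sumr.
by apply: eq_bigr => j _; rewrite exprD scalerAr.
Qed.

Lemma skew_mul_monomial (c : F) d (h : {poly F}) :
  (c *: 'X^d) ** h = 'X^d * \poly_(j < size h) (c * h`_j ^+ (p ^ d)).
Proof.
have sd : (size (c *: 'X^d : {poly F}) <= d.+1)%N.
  by rewrite (leq_trans (size_scale_leq _ _)) // size_polyXn.
rewrite (@skew_mul_widen _ _ d.+1 (size h)) // big_ord_recr /= big1 ?add0r.
  rewrite poly_def mulr_sumr; apply: eq_bigr => j _.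
  by rewrite coefZ coefXn eqxx mulr1 exprD scalerAr.
by move=> i _; rewrite big1 // => j _; rewrite coefZ coefXn ltn_eqF // mulr0 mul0r scale0r.
Qed.

(* Degrees add: deg (f g) = deg f + deg g, as theta is injective. *)
Lemma size_skew_mul (f g : {poly F}) :
  f != 0 -> g != 0 -> size (f ** g) = (size f + size g).-1.
Proof.
move=> f0 g0; rewrite skew_mul_rows.
have lf0 : lead_coef f != 0 by rewrite lead_coef_eq0.
have lg0 : lead_coef g != 0 by rewrite lead_coef_eq0.
move: lf0 lg0; rewrite !lead_coefE.
case ef: (size f) (size_poly_gt0 f) => [|k]; first by rewrite f0.
case eg: (size g) (size_poly_gt0 g) => [|l]; first by rewrite g0.
move=> _ _ /= fk0 gl0.
have size_top : size (skew_row f g k) = l.+1.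
  by rewrite /skew_row eg size_poly_eq // mulf_neq0 // expf_neq0.
have size_row : size ('X^k * skew_row f g k) = (k + l.+1)%N.
  by rewrite mulrC size_mulXn ?size_top // -size_poly_gt0 size_top.
rewrite big_ord_recr /= addrC size_polyDl size_row; first by rewrite addnS.
apply: (big_ind (fun q : {poly F} => size q < (k + l.+1)%N)%N).
- by rewrite size_poly0 addn_gt0 orbT.
- by move=> x y hx hy; rewrite (leq_ltn_trans (size_polyD _ _)) // gtn_max hx hy.
move=> i _; rewrite mulrC.
have [->|nz] := eqVneq (skew_row f g i) 0; first by rewrite mul0r size_poly0 addn_gt0 orbT.
have row_size : (size (skew_row f g i) <= l.+1)%N by rewrite /skew_row -eg size_poly.
by rewrite size_mulXn //; have := ltn_ord i; lia.
Qed.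

Lemma skew_unitE (g : {poly F}) : skew_unit p g <-> size g = 1%N.
Proof.
split=> [[g' [gg' _]]|sg].
  have nz (a b : {poly F}) : a ** b = 1 -> (a != 0) && (b != 0).
    move=> ab; apply/andP; split; apply/eqP=> e; move: ab.
      by rewrite e skew_mul0l => /eqP; rewrite eq_sym oner_eq0.
    by rewrite e skew_mul0r => /eqP; rewrite eq_sym oner_eq0.
  have /andP[g0 g'0] := nz _ _ gg'.
  have := size_skew_mul g0 g'0; rewrite gg' size_poly1.
  by have := size_poly_gt0 g; have := size_poly_gt0 g'; rewrite g0 g'0; lia.
have [c c0 ->] : exists2 c, c != 0 & g = c%:P.
  exists g`_0; last by apply: size1_polyC; rewrite sg.
  by move: (lead_coef_eq0 g); rewrite lead_coefE sg -size_poly_eq0 sg => ->.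
have mulC (a b : F) : a%:P ** b%:P = (a * b)%:P.
  rewrite (@skew_mul_widen _ _ 1 1) ?size_polyC_leq1 // !big_ord1 !coefC /=.
  by rewrite expn0 expr1 alg_polyC.
by exists c^-1%:P; rewrite !mulC mulfV ?mulVf.
Qed.

(* One step of right division: when deg h <= deg f, subtracting
   (c t^d) h with d = deg f - deg h and c = lc f / theta^d (lc h) kills the
   leading term of f. *)
Lemma skew_lead_cancel (f h : {poly F}) :
  h != 0 -> (size h <= size f)%N ->
  exists m : {poly F}, (size (f - m ** h)%R < size f)%N.
Proof.
move=> h0 hf; set d := (size f - size h)%N.
have sh : (0 < size h)%N by rewrite size_poly_gt0.
set c := lead_coef f / lead_coef h ^+ (p ^ d).
exists (c *: 'X^d); rewrite -(prednK (leq_trans sh hf)) ltnS.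
apply/leq_sizeP => j jf.
rewrite coefB skew_mul_monomial coefXnM coef_poly.
have -> : (j < d)%N = false by apply/negbTE; rewrite -leqNgt; lia.
have [->|jtop] := eqVneq j (size f).-1.
  have -> : ((size f).-1 - d < size h)%N by lia.
  have -> : ((size f).-1 - d)%N = (size h).-1 by lia.
  by rewrite -!lead_coefE divfK ?subrr // expf_neq0 // lead_coef_eq0.
have jf' : (size f <= j)%N by lia.
by rewrite nth_default // sub0r; case: ifP => [|_]; [lia | rewrite oppr0].
Qed.

Lemma skew_right_division (f h : {poly F}) :
  h != 0 -> exists q r : {poly F}, f = q ** h + r /\ (size r < size h)%N.
Proof.
move=> h0; elim: {f}(size f).+1 {-2}f (ltnSn (size f)) => // n IH f sfn.
have [lt|ge] := ltnP (size f) (size h).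
  by exists 0, f; rewrite skew_mul0l add0r.
have [m sm] := skew_lead_cancel h0 ge.
have [q [r [e sr]]] := IH (f - m ** h) (leq_trans sm sfn).
by exists (q + m), r; rewrite skew_mulDl addrAC -e subrK.
Qed.

End SkewProduct.

Section Linearization.

Variables (F : fieldType) (p : nat).
Hypotheses (p_prime : prime p) (p_char : p \in [pchar F]).

Local Notation "f ** g" := (skew_mul p f g) (at level 40, left associativity).
Local Notation lin := (@linearized F p).

Let p_gt1 : (1 < p)%N := prime_gt1 p_prime.
Let p_gt0 : (0 < p)%N := prime_gt0 p_prime.

Lemma linearized_widen (f : {poly F}) n :
  (size f <= n)%N -> lin f = \sum_(i < n) f`_i *: 'X^(bracket p i).
Proof.
move=> sfn; rewrite /linearized.
rewrite (big_ord_widen n (fun i => f`_i *: 'X^(bracket p i))) // big_mkcond.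
apply: eq_bigr => i _; case: ifP => // /negbT.
by rewrite -leqNgt => fi0; rewrite nth_default // scale0r.
Qed.

Lemma linearized0 : lin 0 = 0.
Proof. by rewrite /linearized size_poly0 big_ord0. Qed.

Lemma linearizedD (f g : {poly F}) : lin (f + g) = lin f + lin g.
Proof.
set n := maxn (size f) (size g).
rewrite !(@linearized_widen _ n) ?leq_maxl ?leq_maxr ?(leq_trans (size_polyD _ _)) //.
by rewrite -big_split; apply: eq_bigr => i _; rewrite coefD scalerDl.
Qed.

Lemma linearized_sum (I : Type) (r : seq I) (P : pred I) (G : I -> {poly F}) :
  lin (\sum_(i <- r | P i) G i) = \sum_(i <- r | P i) lin (G i).
Proof. exact: (big_morph _ linearizedD linearized0). Qed.

Lemma linearized_monomial (c : F) k : lin (c *: 'X^k) = c *: 'X^(bracket p k).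
Proof.
rewrite (@linearized_widen _ k.+1); last first.
  by rewrite (leq_trans (size_scale_leq _ _)) // size_polyXn.
rewrite big_ord_recr /= coefZ coefXn eqxx mulr1 big1 ?add0r // => i _.
by rewrite coefZ coefXn ltn_eqF // mulr0 scale0r.
Qed.

Lemma size_linearized (f : {poly F}) :
  f != 0 -> size (lin f) = (bracket p (size f).-1).+1.
Proof.
move=> f0; rewrite /linearized.
have : lead_coef f != 0 by rewrite lead_coef_eq0.
rewrite lead_coefE; case ef: (size f) (size_poly_gt0 f) => [|k]; first by rewrite f0.
move=> _ /= fk0; rewrite big_ord_recr /= addrC size_polyDl size_scale // size_polyXn //.
apply: (big_ind (fun q : {poly F} => size q < (bracket p k).+1)%N).
- by rewrite size_poly0.
- by move=> x y hx hy; rewrite (leq_ltn_trans (size_polyD _ _)) // gtn_max hx hy.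
move=> i _; rewrite (leq_ltn_trans (size_scale_leq _ _)) // size_polyXn ltnS.
by rewrite (ltn_bracket p_gt1).
Qed.

Lemma linearized_eq0 (f : {poly F}) : (lin f == 0) = (f == 0).
Proof.
have [->|f0] := eqVneq f 0; first by rewrite linearized0 eqxx.
by rewrite -size_poly_eq0 size_linearized.
Qed.

Lemma expr_pchar_sum n (I : Type) (r : seq I) (P : pred I) (G : I -> {poly F}) :
  (\sum_(i <- r | P i) G i) ^+ (p ^ n) = \sum_(i <- r | P i) G i ^+ (p ^ n).
Proof.
have pn_nat : [pchar {poly F}].-nat (p ^ n)%N.
  by rewrite (eq_pnat _ (pchar_poly F)) (eq_pnat _ (pcharf_eq p_char)) pnatX pnat_id.
apply: (big_morph _ (fun x y => exprDn_pchar x y pn_nat)).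
by rewrite expr0n expn_eq0 eqn0Ngt p_gt0.
Qed.

Lemma linearized_skew_mul (g h : {poly F}) :
  lin (g ** h) = \sum_(i < size g) g`_i *: (lin h ^+ (p ^ i) * 'X^(bracket p i)).
Proof.
rewrite /skew_mul linearized_sum; apply: eq_bigr => i _.
rewrite linearized_sum {2}/linearized expr_pchar_sum mulr_suml scaler_sumr.
apply: eq_bigr => j _.
by rewrite linearized_monomial exprZn -exprM -scalerAl -exprD scalerA -(bracketD p_gt1).
Qed.

Lemma linearized_dvd_skew_mul (g h : {poly F}) : lin h %| lin (g ** h).
Proof.
rewrite linearized_skew_mul.
apply: (big_ind (fun q => lin h %| q)); [exact: dvdp0 | exact: dvdp_add |].
by move=> i _; rewrite -mul_polyC dvdp_mull // dvdp_mulr // dvdp_exp // expn_gt0 p_gt0.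
Qed.

Lemma linearized_dvd_right_factor (f h : {poly F}) :
  h != 0 -> lin h %| lin f -> exists q : {poly F}, f = q ** h.
Proof.
move=> h0; have [q [r [-> sr]]] := skew_right_division p_gt0 f h0.
move=> hf; exists q; have [-> | r0] := eqVneq r 0; first by rewrite addr0.
have : lin h %| lin r.
  by rewrite -(dvdp_addr _ (linearized_dvd_skew_mul q h)) -linearizedD.
move/dvdp_leq; rewrite linearized_eq0 => /(_ r0).
rewrite !size_linearized // ltnS leqNgt (ltn_bracket p_gt1).
by have := size_poly_gt0 r; rewrite r0; lia.
Qed.

Lemma in_bracket_span_linearized (u : {poly F}) :
  in_bracket_span p u -> exists h : {poly F}, u = lin h.
Proof.
move=> [s ->]; exists (Poly s); rewrite (@linearized_widen _ (size s)) ?size_Poly //.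
by apply: eq_bigr => i _; rewrite coef_Poly.
Qed.

End Linearization.

Section Criterion.

Variables (F : fieldType) (p : nat).
Hypotheses (p_prime : prime p) (p_char : p \in [pchar F]).

Local Notation "f ** g" := (skew_mul p f g) (at level 40, left associativity).
Local Notation lin := (@linearized F p).
Local Notation deg f := (size f).-1.

Let p_gt1 : (1 < p)%N := prime_gt1 p_prime.
Let p_gt0 : (0 < p)%N := prime_gt0 p_prime.

Lemma deg_linearized (f : {poly F}) : f != 0 -> deg (lin f) = bracket p (deg f).
Proof. by move=> f0; rewrite size_linearized. Qed.

Lemma bracket_divisor_of_factors (g h : {poly F}) :
  (1 < size g)%N -> (1 < size h)%N ->
  [/\ in_bracket_span p (lin h), lin h %| lin (g ** h),
      (0 < deg (lin h))%N & (deg (lin h) < deg (lin (g ** h)))%N].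
Proof.
move=> g_gt1 h_gt1.
have [g0 h0] : g != 0 /\ h != 0 by rewrite -!size_poly_gt0; split; lia.
have gh0 : g ** h != 0 by rewrite -size_poly_gt0 size_skew_mul //; lia.
split; first by exists h.
- exact: linearized_dvd_skew_mul.
- by rewrite deg_linearized // -(bracket0 p) (ltn_bracket p_gt1); lia.
by rewrite !deg_linearized // (ltn_bracket p_gt1) size_skew_mul //; lia.
Qed.

Lemma factors_of_bracket_divisor (f u : {poly F}) :
  in_bracket_span p u -> u %| lin f ->
  (0 < deg u)%N -> (deg u < deg (lin f))%N ->
  exists g h : {poly F}, [/\ f = g ** h, (1 < size g)%N & (1 < size h)%N].
Proof.
move=> /in_bracket_span_linearized [h ->] h_dvd u_gt0 u_lt.
have h0 : h != 0 by apply: contraTneq u_gt0 => ->; rewrite linearized0 size_poly0.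
have f0 : f != 0 by apply: contraTneq u_lt => ->; rewrite linearized0 size_poly0.
have [g fgh] := linearized_dvd_right_factor p_prime p_char h0 h_dvd.
have g0 : g != 0 by apply: contra_neq f0 => g0; rewrite fgh g0 skew_mul0l.
have h_gt0 : (0 < deg h)%N.
  by move: u_gt0; rewrite deg_linearized // -{1}(bracket0 p) (ltn_bracket p_gt1).
have h_lt : (deg h < deg f)%N.
  by move: u_lt; rewrite !deg_linearized // (ltn_bracket p_gt1).
have size_f : size f = (size g + size h).-1 by rewrite fgh size_skew_mul.
by exists g, h; split => //; lia.
Qed.

End Criterion.

Lemma skew_irreducible_criterion (F : fieldType) (p : nat) (hp : prime p)
    (hchar : p \in [pchar F]) (f : {poly F}) (hdeg : (1 <= (size f).-1)%N) :
  skew_irreducible p f <->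
  ~ (exists u : {poly F},
       [/\ in_bracket_span p u, u %| linearized p f,
           (0 < (size u).-1)%N & ((size u).-1 < (size (linearized p f)).-1)%N]).
Proof.
have p_gt0 := prime_gt0 hp; split.
- move=> [_ f_irr] [u [u_span u_dvd u_gt0 u_lt]].
  have [g [h [fgh g_gt1 h_gt1]]] :=
    factors_of_bracket_divisor hp hchar u_span u_dvd u_gt0 u_lt.
  by case: (f_irr g h fgh) => /(skew_unitE p_gt0) unit_size; lia.
- move=> no_divisor; split=> [/(skew_unitE p_gt0) | g h fgh]; first lia.
  have f0 : f != 0 by rewrite -size_poly_gt0; lia.
  have [g0 h0] : g != 0 /\ h != 0.
    by split; apply: contra_neq f0 => fac0; rewrite fgh fac0 ?skew_mul0l ?skew_mul0r.
  rewrite !(skew_unitE p_gt0).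
  have [g1|g_ne1] := eqVneq (size g) 1%N; first by left.
  have [h1|h_ne1] := eqVneq (size h) 1%N; first by right.
  have [g_gt1 h_gt1] : (1 < size g)%N /\ (1 < size h)%N.
    by move: g0 h0; rewrite -!size_poly_gt0; lia.
  case: no_divisor; exists (linearized p h).
  by rewrite fgh; apply: bracket_divisor_of_factors.
Qed.

Theorem corollary2p6 (F : finFieldType) (p : nat) (hp : prime p)
    (hchar : p \in [pchar F]) (f : {poly F}) (hdeg : (1 <= (size f).-1)%N) :
  skew_irreducible p f <->
  ~ (exists u : {poly F},
       [/\ in_bracket_span p u, u %| linearized p f,
           (0 < (size u).-1)%N & ((size u).-1 < (size (linearized p f)).-1)%N]).
Proof. exact: (@skew_irreducible_criterion F p hp hchar f hdeg). Qed.
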